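(* Let $V_1,V_2$ be closed subspaces of a Hilbert space $\mathcal H$, neither of which contains the other, with $\angle(V_1,V_2)>0$. For $w\in\mathcal H$ let $w_0=P_{V_1\cap V_2}(w)$, $w_1=P_{V_1}(w)$, and let $d_i(w)$ be the distance from $w$ to $V_i$ ($i=1,2$). Then $\|w_1-w_0\|\le\dfrac{\cos\angle(V_1,V_2)\,d_1(w)+d_2(w)}{\sin\angle(V_1,V_2)}$.
   Context: $P_V$ denotes orthogonal projection onto a closed subspace $V$. For closed subspaces $V_1,V_2$ neither of which contains the other, the (Friederichs) angle $\angle(V_1,V_2)\in[0,\pi/2]$ is defined by $\cos\angle(V_1,V_2)=\sup\{|\langle v_1,v_2\rangle| : v_i\in V_i,\ \|v_i\|=1,\ v_i\perp V_1\cap V_2\}$. *)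

From HB Require Import structures.
From mathcomp Require Import all_boot all_order all_algebra.
From mathcomp Require Import all_classical all_reals all_analysis.
Set Implicit Arguments. Unset Strict Implicit. Unset Printing Implicit Defensive.
Import Order.TTheory GRing.Theory Num.Theory.
Import numFieldNormedType.Exports.
Local Open Scope classical_set_scope.
Local Open Scope ring_scope.

(* A real Hilbert space is a complete normed space H whose norm comes from
   an inner product [ip]: symmetric, bilinear, with ip x x = `|x|^2
   (positivity / definiteness then follow from the norm axioms). *)
Definition is_inner_product (R : realType) (H : completeNormedModType R)
    (ip : H -> H -> R) : Prop :=
  [/\ (forall x y, ip x y = ip y x),
      (forall a x y z, ip (a *: x + y) z = a * ip x z + ip y z)
    & (forall x, ip x x = `|x| ^+ 2)].

Definition closed_subspace (R : realType) (H : completeNormedModType R)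
    (V : set H) : Prop :=
  [/\ V 0, (forall a x y, V x -> V y -> V (a *: x + y)) & closed V].

Definition is_orth_proj (R : realType) (H : completeNormedModType R)
    (ip : H -> H -> R) (V : set H) (w p : H) : Prop :=
  V p /\ (forall v, V v -> ip (w - p) v = 0).

Definition dist_to (R : realType) (H : completeNormedModType R)
    (V : set H) (w : H) : R :=
  inf [set `|w - v| | v in V].

Definition orth_to (R : realType) (H : completeNormedModType R)
    (ip : H -> H -> R) (W : set H) (v : H) : Prop :=
  forall u, W u -> ip v u = 0.

Definition friedrichs_cos (R : realType) (H : completeNormedModType R)
    (ip : H -> H -> R) (V1 V2 : set H) : R :=
  sup [set r : R | exists v1 v2 : H,
         [/\ V1 v1 /\ `|v1| = 1 /\ orth_to ip (V1 `&` V2) v1,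
              V2 v2 /\ `|v2| = 1 /\ orth_to ip (V1 `&` V2) v2
            & r = `|ip v1 v2|]].

Definition friedrichs_angle (R : realType) (H : completeNormedModType R)
    (ip : H -> H -> R) (V1 V2 : set H) : R :=
  acos (friedrichs_cos ip V1 V2).

From HB Require Import structures.
From mathcomp Require Import all_boot all_order all_algebra.
From mathcomp Require Import all_classical all_reals all_analysis.
From mathcomp Require Import ring lra.
Import Order.TTheory GRing.Theory Num.Theory.
Import numFieldNormedType.Exports.
Local Open Scope classical_set_scope.
Local Open Scope ring_scope.
Set Implicit Arguments. Unset Strict Implicit.

(* Write u = w1 - w0 (in V1, orthogonal to V1 ∩ V2) and a = w - w1 (orthogonal
   to V1).  For x in V2, remove from x - w0 its component in V1 ∩ V2 to get z in
   V2 orthogonal to V1 ∩ V2; then |w - x| >= |u + a - z|.  Splitting z along V1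
   as p + r, the Friedrichs angle gives |p| <= cos |z|, hence sin |p| <= cos |r|.
   As |u + a - z|^2 = |u - p|^2 + |a - r|^2 and sin^2 + cos^2 = 1,
   |u + a - z| >= sin |u - p| + cos |a - r| >= sin |u| - cos |a|, and taking the
   infimum over x gives sin |u| <= cos d1(w) + d2(w).  Orthogonal projections
   onto closed subspaces come from minimizing sequences, which are Cauchy by
   the parallelogram law. *)

Lemma ler_sincos_hypot (R : realType) (s c X Y D : R) :
  s ^+ 2 + c ^+ 2 = 1 -> 0 <= D -> X ^+ 2 + Y ^+ 2 = D ^+ 2 ->
  s * X + c * Y <= D.
Proof.
move=> sc D0 XY.
have lagrange : (s * X + c * Y) ^+ 2 + (c * X - s * Y) ^+ 2 = D ^+ 2.
  by rewrite -XY -[RHS]mul1r -sc; ring.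
have := sqr_ge0 (c * X - s * Y); nra.
Qed.

Section InnerProductSpace.
Variables (R : realType) (H : completeNormedModType R) (ip : H -> H -> R).
Hypothesis hip : is_inner_product ip.
Implicit Types x y z : H.

Lemma ipC x y : ip x y = ip y x.
Proof. by case: hip. Qed.

Lemma ip_norm2 x : ip x x = `|x| ^+ 2.
Proof. by case: hip. Qed.

Lemma ipDl x y z : ip (x + y) z = ip x z + ip y z.
Proof. by case: hip => _ lin _; rewrite -[x in LHS]scale1r lin mul1r. Qed.

Lemma ip0l z : ip 0 z = 0.
Proof. by apply: (@addrI _ (ip 0 z)); rewrite -ipDl !addr0. Qed.

Lemma ipZl a x z : ip (a *: x) z = a * ip x z.
Proof. by case: hip => _ lin _; rewrite -[a *: x]addr0 lin ip0l addr0. Qed.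

Lemma ipBl x y z : ip (x - y) z = ip x z - ip y z.
Proof. by rewrite ipDl -scaleN1r ipZl mulN1r. Qed.

Lemma ipDr x y z : ip z (x + y) = ip z x + ip z y.
Proof. by rewrite !(ipC z) ipDl. Qed.

Lemma ipZr a x z : ip z (a *: x) = a * ip z x.
Proof. by rewrite !(ipC z) ipZl. Qed.

Lemma ip0r z : ip z 0 = 0.
Proof. by rewrite ipC ip0l. Qed.

Lemma normD2 x y : `|x + y| ^+ 2 = `|x| ^+ 2 + 2 * ip x y + `|y| ^+ 2.
Proof. by rewrite -!ip_norm2 !(ipDl, ipDr) (ipC y x); ring. Qed.

Lemma normB2 x y : `|x - y| ^+ 2 = `|x| ^+ 2 - 2 * ip x y + `|y| ^+ 2.
Proof. by rewrite normD2 normrN -scaleN1r ipZr; ring. Qed.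

Lemma parallelogram x y :
  `|x + y| ^+ 2 + `|x - y| ^+ 2 = 2 * `|x| ^+ 2 + 2 * `|y| ^+ 2.
Proof. by rewrite normD2 normB2; ring. Qed.

Lemma pythagoras x y : ip x y = 0 -> `|x + y| ^+ 2 = `|x| ^+ 2 + `|y| ^+ 2.
Proof. by move=> xy; rewrite normD2 xy mulr0 addr0. Qed.

Lemma ler_norm_orthD x y : ip x y = 0 -> `|x| <= `|x + y|.
Proof.
move=> xy; rewrite -(ler_pXn2r (_ : 0 < 2)%N) ?nnegrE //.
by rewrite pythagoras // lerDl sqr_ge0.
Qed.

Lemma cauchy_schwarz x y : `|ip x y| <= `|x| * `|y|.
Proof.
have [->|y0] := eqVneq y 0; first by rewrite ip0r !normr0 mulr0.
have k0 : `|y| ^+ 2 != 0 by rewrite expf_neq0 // normr_eq0.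
(* expand 0 <= |x - t y|^2 at the minimizing t = <x,y> / |y|^2 *)
have := sqr_ge0 `|x - (ip x y / `|y| ^+ 2) *: y|.
rewrite normB2 ipZr normrZ exprMn real_normK ?num_real //.
set I := ip x y; set k := `|y| ^+ 2 => hge0.
have hI : I ^+ 2 <= (`|x| * `|y|) ^+ 2.
  have kpos : 0 < k by rewrite lt_neqAle eq_sym k0 sqr_ge0.
  rewrite exprMn -/k -subr_ge0 -(pmulr_rge0 _ kpos).
  suff -> : k * (`|x| ^+ 2 * k - I ^+ 2) = k ^+ 2 * (`|x| ^+ 2 - 2 * (I / k * I) + (I / k) ^+ 2 * k).
    by rewrite mulr_ge0 ?sqr_ge0.
  by field.
by rewrite -(ler_pXn2r (_ : 0 < 2)%N) ?nnegrE ?mulr_ge0 // real_normK ?num_real.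
Qed.

End InnerProductSpace.

Section ClosedSubspace.
Variables (R : realType) (H : completeNormedModType R) (V : set H).
Hypothesis hV : closed_subspace V.

Lemma closed_subspace0 : V 0.
Proof. by case: hV. Qed.

Lemma closed_subspaceZ a x : V x -> V (a *: x).
Proof. by case: hV => V0 lin _ Vx; rewrite -[_ *: _]addr0; apply: lin. Qed.

Lemma closed_subspaceD x y : V x -> V y -> V (x + y).
Proof. by case: hV => _ lin _ Vx Vy; rewrite -[x]scale1r; apply: lin. Qed.

Lemma closed_subspaceB x y : V x -> V y -> V (x - y).
Proof. by move=> Vx Vy; rewrite -scaleN1r; apply/closed_subspaceD/closed_subspaceZ. Qed.

End ClosedSubspace.

Lemma closed_subspaceI (R : realType) (H : completeNormedModType R) (V W : set H) :
  closed_subspace V -> closed_subspace W -> closed_subspace (V `&` W).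
Proof.
move=> [V0 linV cV] [W0 linW cW]; split => //; last exact: closedI.
by move=> a x y [? ?] [? ?]; split; [apply: linV | apply: linW].
Qed.

Lemma dist_to_ge (R : realType) (H : completeNormedModType R) (V : set H) w r :
  V !=set0 -> (forall v, V v -> r <= `|w - v|) -> r <= dist_to V w.
Proof. by move=> [v Vv] lb; apply: lb_le_inf => [|_ [u Vu <-]]; [exists `|w - v|, v | exact: lb]. Qed.

Section Projection.
Variables (R : realType) (H : completeNormedModType R) (ip : H -> H -> R).
Hypothesis hip : is_inner_product ip.
Variable V : set H.
Hypothesis hV : closed_subspace V.
Implicit Types z q m : H.

Lemma orth_proj_nearest z p v : is_orth_proj ip V z p -> V v -> `|z - p| <= `|z - v|.
Proof.
move=> [Vp orth] Vv; have -> : z - v = (z - p) + (p - v) by rewrite addrA subrK.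
by apply: (ler_norm_orthD hip); apply: orth; apply: closed_subspaceB.
Qed.

Lemma orth_proj_dist z p : is_orth_proj ip V z p -> dist_to V z = `|z - p|.
Proof.
move=> zp; apply/eqP; rewrite eq_le; apply/andP; split.
  by apply: ge_inf; [exists 0 => _ [v _ <-] | exists p => //; case: zp].
by apply: dist_to_ge => [|v]; [exists 0; apply: closed_subspace0 | exact: orth_proj_nearest].
Qed.

Lemma orth_of_nearest z q : V q -> (forall m, V m -> `|z - q| <= `|z - m|) ->
  forall m, V m -> ip (z - q) m = 0.
Proof.
move=> Vq qmin m Vm; have [->|m0] := eqVneq m 0; first exact: (ip0r hip).
set g := ip (z - q) m; set N := `|m| ^+ 2; set t := g / N.
have N0 : 0 < N by rewrite exprn_gt0 // normr_gt0.
have tN : t * N = g by rewrite divfK // gt_eqF.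
have := qmin (q + t *: m) (closed_subspaceD hV Vq (closed_subspaceZ hV t Vm)).
rewrite -(ler_pXn2r (_ : 0 < 2)%N) ?nnegrE // opprD addrA (normB2 hip (z - q)) (ipZr hip).
rewrite normrZ exprMn real_normK ?num_real // -/g -/N => h.
have : t ^+ 2 * N <= 0 by rewrite -tN in h; nra.
rewrite pmulr_lle0 // => t2le0.
have t0 : t = 0 by apply/eqP; rewrite -sqrf_eq0 eq_le t2le0 sqr_ge0.
by rewrite -tN t0 mul0r.
Qed.

Lemma near_minimizers_close z d m m' : (forall v, V v -> d <= `|z - v| ^+ 2) ->
  V m -> V m' ->
  `|m - m'| ^+ 2 <= 2 * (`|z - m| ^+ 2 - d) + 2 * (`|z - m'| ^+ 2 - d).
Proof.
move=> dle Vm Vm'.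
have mid := dle (2^-1 *: (m + m')) (closed_subspaceZ hV _ (closed_subspaceD hV Vm Vm')).
have e : (z - m) + (z - m') = 2 *: (z - 2^-1 *: (m + m')).
  by rewrite scalerBr scalerA mulfV ?pnatr_eq0 // scale1r scaler_nat mulr2n opprD addrACA.
have := parallelogram hip (z - m) (z - m').
rewrite e normrZ ger0_norm // exprMn (_ : z - m - (z - m') = m' - m); last first.
  by rewrite opprB addrC addrA subrK.
rewrite (distrC m) (_ : 2 ^+ 2 = 4 :> R); last by rewrite expr2 -natrM.
lra.
Qed.

Lemma minimizing_seq_cvg z d (ms : nat -> H) :
  (forall v, V v -> d <= `|z - v| ^+ 2) -> (forall n, V (ms n)) ->
  (forall n, `|z - ms n| ^+ 2 <= d + n.+1%:R^-1) -> cvg (ms @ \oo).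
Proof.
move=> dle msV msmin; apply: cauchy_cvg; apply: cauchy_exP => e e0.
have e20 : 0 < e ^+ 2 / 4 by rewrite divr_gt0 // exprn_gt0.
have [N _ /(_ N (leqnn _)) hN] := near_infty_natSinv_lt (PosNum e20).
exists (ms N); exists N => // n /= Nn; rewrite -ball_normE /ball_ /=.
have close := near_minimizers_close dle (msV N) (msV n).
have nN : n.+1%:R^-1 <= N.+1%:R^-1 :> R.
  by rewrite lef_pV2 ?posrE ?ltr0n // ler_nat ltnS.
have mN := msmin N; have mn := msmin n; rewrite /= in hN.
have : `|ms N - ms n| ^+ 2 < e ^+ 2.
  move: mN mn nN hN close; set a := N.+1%:R^-1; set b := n.+1%:R^-1; set E := e ^+ 2.
  lra.
by rewrite -(ltr_pXn2r (_ : 0 < 2)%N) ?nnegrE // ltW.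
Qed.

Lemma nearest_point_exists z : exists2 q, V q & forall m, V m -> `|z - q| <= `|z - m|.
Proof.
set S := [set `|z - m| ^+ 2 | m in V]; pose d := inf S.
have S_inf : has_inf S.
  split; first by exists (`|z - 0| ^+ 2), 0 => //; exact: closed_subspace0 hV.
  by exists 0 => _ [v _ <-]; exact: sqr_ge0.
have dle m : V m -> d <= `|z - m| ^+ 2 by move=> Vm; apply: (ge_inf (proj2 S_inf)); exists m.
have ms_ex n : exists m, V m /\ `|z - m| ^+ 2 < d + n.+1%:R^-1.
  have n0 : 0 < n.+1%:R^-1 :> R by rewrite invr_gt0 ltr0n.
  by have [_ [m Vm <-] ?] := inf_adherent n0 S_inf; exists m.
have [ms msP] := choice ms_ex.
have cvg_ms := minimizing_seq_cvg dle (fun n => (msP n).1) (fun n => ltW (msP n).2).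
set q := lim (ms @ \oo).
have Vq : V q by apply: (closed_cvg V _ _ _ cvg_ms); [case: hV | exact: nearW (fun n => (msP n).1)].
exists q => // m Vm; rewrite -(ler_pXn2r (_ : 0 < 2)%N) ?nnegrE //.
apply: le_trans (dle m Vm); apply/ler_addgt0Pr => e e0.
have d0 : 0 <= d by apply: (lb_le_inf (proj1 S_inf)) => _ [v _ <-]; exact: sqr_ge0.
have : closed_ball_ Num.norm z (Num.sqrt (d + e)) q.
  apply: (closed_cvg _ (@closed_closed_ball_ _ _ z _) _ _ cvg_ms).
  have [N _ hN] := near_infty_natSinv_lt (PosNum e0).
  exists N => // n /= Nn; rewrite /closed_ball_ /= -ler_sqr ?nnegrE ?sqrtr_ge0 //.
  rewrite sqr_sqrtr; last lra.
  have := (msP n).2; have := hN n Nn; rewrite /=; set a := n.+1%:R^-1; lra.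
by rewrite /closed_ball_ /= -ler_sqr ?nnegrE ?sqrtr_ge0 // sqr_sqrtr //; lra.
Qed.

Lemma orth_proj_exists z : exists p, is_orth_proj ip V z p.
Proof. by have [q Vq qmin] := nearest_point_exists z; exists q; split=> //; apply: orth_of_nearest. Qed.

End Projection.

Section Orthogonality.
Variables (R : realType) (H : completeNormedModType R) (ip : H -> H -> R).
Hypothesis hip : is_inner_product ip.
Variable W : set H.

Lemma orth_toD x y : orth_to ip W x -> orth_to ip W y -> orth_to ip W (x + y).
Proof. by move=> ox oy m Wm; rewrite (ipDl hip) ox // oy // addr0. Qed.

Lemma orth_toB x y : orth_to ip W x -> orth_to ip W y -> orth_to ip W (x - y).
Proof. by move=> ox oy m Wm; rewrite (ipBl hip) ox // oy // subr0. Qed.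

End Orthogonality.

Section Friedrichs.
Variables (R : realType) (H : completeNormedModType R) (ip : H -> H -> R).
Hypothesis hip : is_inner_product ip.
Variables V1 V2 : set H.
Hypotheses (hV1 : closed_subspace V1) (hV2 : closed_subspace V2).
Local Notation M := (V1 `&` V2).
Local Notation c := (friedrichs_cos ip V1 V2).
Local Notation s := (Num.sqrt (1 - c ^+ 2)).

Lemma friedrichs_cos_itv : c \in `[0, 1].
Proof.
rewrite /friedrichs_cos; set S := (X in sup X).
have S_itv r : S r -> 0 <= r <= 1.
  move=> [v1 [v2 [[_ [n1 _]] [_ [n2 _]] ->]]].
  by rewrite normr_ge0 /= -(mulr1 1) -{1}n1 -n2 (cauchy_schwarz hip).
have [S0|/set0P[r Sr]] := eqVneq S set0; first by rewrite S0 sup0 in_itv /= lexx ler01.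
have S_sup : has_sup S by split; [exists r | exists 1 => x /S_itv /andP[]].
rewrite in_itv /=; apply/andP; split.
  by case/andP: (S_itv r Sr) => r0 _; apply: le_trans r0 (sup_upper_bound S_sup Sr).
by apply: ge_sup; [exists r | move=> x /S_itv /andP[]].
Qed.

Lemma ip_le_friedrichs_cos v1 v2 : V1 v1 -> orth_to ip M v1 ->
  V2 v2 -> orth_to ip M v2 -> `|ip v1 v2| <= c * `|v1| * `|v2|.
Proof.
move=> V1v1 o1 V2v2 o2.
have [->|n1] := eqVneq v1 0; first by rewrite (ip0l hip) !normr0 mulr0 mul0r.
have [->|n2] := eqVneq v2 0; first by rewrite (ip0r hip) !normr0 !mulr0.
have p1 : 0 < `|v1| by rewrite normr_gt0.
have p2 : 0 < `|v2| by rewrite normr_gt0.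
rewrite -mulrA -ler_pdivrMr ?mulr_gt0 //.
rewrite /friedrichs_cos; set S := (X in sup X).
have unit_vec (V : set H) v : closed_subspace V -> V v -> v != 0 -> orth_to ip M v ->
    V (`|v|^-1 *: v) /\ `| `|v|^-1 *: v| = 1 /\ orth_to ip M (`|v|^-1 *: v).
  move=> hV Vv v0 ov; split; first exact: closed_subspaceZ.
  split; first by rewrite normrZ normfV normr_id mulVf ?normr_eq0.
  by move=> m Mm; rewrite (ipZl hip) ov // mulr0.
have Sv : S (`|ip v1 v2| / (`|v1| * `|v2|)).
  exists (`|v1|^-1 *: v1), (`|v2|^-1 *: v2); split; [exact: unit_vec | exact: unit_vec |].
  rewrite (ipZl hip) (ipZr hip) !normrM !normfV !normr_id invfM; ring.
apply: (sup_upper_bound _ Sv); split; first by exists (`|ip v1 v2| / (`|v1| * `|v2|)).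
exists 1 => _ [u1 [u2 [[_ [nu1 _]] [_ [nu2 _]] ->]]].
by rewrite -(mulr1 1) -{1}nu1 -nu2 (cauchy_schwarz hip).
Qed.

Lemma friedrichs_proj_le z p : V2 z -> orth_to ip M z -> is_orth_proj ip V1 z p ->
  `|p| <= c * `|z|.
Proof.
move=> V2z oz [V1p orth].
have c0 : 0 <= c by have := friedrichs_cos_itv; rewrite in_itv => /andP[].
have [->|p0] := eqVneq p 0; first by rewrite normr0 mulr_ge0.
have op : orth_to ip M p.
  by have := orth_toB hip oz (fun m (Mm : M m) => orth m Mm.1); rewrite subKr.
have pz : `|p| ^+ 2 = ip p z.
  by rewrite -{1}[z](subrKC p) (ipDr hip) (ipC hip p (z - p)) orth // addr0 (ip_norm2 hip).
have : `|p| * `|p| <= `|p| * (c * `|z|).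
  rewrite -expr2 pz mulrCA mulrA; apply: le_trans (ler_norm _) _.
  exact: ip_le_friedrichs_cos.
by rewrite ler_pM2l ?normr_gt0.
Qed.

(* Split [z = p + r] along [V1]: the angle bound makes [p] short, [s |p| <= c |r|],
   and [u + a - z = (u - p) + (a - r)] is an orthogonal decomposition. *)
Lemma friedrichs_gap u a z : V1 u -> orth_to ip M u -> orth_to ip V1 a ->
  V2 z -> orth_to ip M z -> s * `|u| <= c * `|a| + `|u + a - z|.
Proof.
move=> V1u ou oa V2z oz.
have /andP[c0 c1] : 0 <= c <= 1 by have := friedrichs_cos_itv; rewrite in_itv.
have s0 : 0 <= s := sqrtr_ge0 _.
have sc : s ^+ 2 + c ^+ 2 = 1 by rewrite sqr_sqrtr ?subrK // subr_ge0 expr_le1.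
have [p zp] := orth_proj_exists hip hV1 z; have [V1p orth] := zp.
set r := z - p.
have z2 : `|z| ^+ 2 = `|p| ^+ 2 + `|r| ^+ 2.
  by rewrite -(pythagoras hip) ?subrKC // (ipC hip) orth.
have sp : s * `|p| <= c * `|r|.
  have pc : `|p| ^+ 2 <= c ^+ 2 * `|z| ^+ 2.
    by rewrite -exprMn ler_sqr ?nnegrE ?mulr_ge0 // friedrichs_proj_le.
  rewrite -ler_sqr ?nnegrE ?mulr_ge0 // !exprMn sqr_sqrtr ?subr_ge0 ?expr_le1 //.
  nra.
have y2 : `|u - p| ^+ 2 + `|a - r| ^+ 2 = `|u + a - z| ^+ 2.
  have ar : orth_to ip V1 (a - r) := orth_toB hip oa orth.
  rewrite -(pythagoras hip) /r; first by rewrite opprB addrACA addKr.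
  by rewrite (ipC hip) ar //; apply: closed_subspaceB.
have := ler_sincos_hypot sc (normr_ge0 _) y2.
have := ler_wpM2l s0 (lerB_dist u p); have := ler_wpM2l c0 (lerB_dist r a).
rewrite (distrC r); lra.
Qed.

Lemma friedrichs_dist_ge w w0 w1 :
  is_orth_proj ip M w w0 -> is_orth_proj ip V1 w w1 ->
  s * `|w1 - w0| <= c * `|w - w1| + dist_to V2 w.
Proof.
move=> [[V1w0 V2w0] o0] [V1w1 o1].
have oaM : orth_to ip M (w - w1) by move=> m [V1m _]; exact: o1.
have ou : orth_to ip M (w1 - w0).
  have -> : w1 - w0 = (w - w0) - (w - w1) by rewrite opprB [RHS]addrC subrKA.
  exact: orth_toB.
rewrite -lerBlDl; apply: dist_to_ge => [|x V2x]; first by exists 0; exact: closed_subspace0 hV2.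
have hM := closed_subspaceI hV1 hV2.
have [q [Mq oq]] := orth_proj_exists hip hM (x - w0).
set z := x - w0 - q.
have V2z : V2 z by apply: (closed_subspaceB hV2); [exact: closed_subspaceB | case: Mq].
have y_orth : orth_to ip M (w1 - w0 + (w - w1) - z) by apply: orth_toB => //; apply: orth_toD.
rewrite lerBlDl; apply: le_trans (friedrichs_gap _ ou o1 V2z oq) _; first exact: closed_subspaceB.
rewrite lerD2l (_ : w - x = w1 - w0 + (w - w1) - z - q); last first.
  by rewrite /z [w1 - w0 + _]addrC subrKA opprB (addrC q) addrA addrK opprB subrKA.
apply: (ler_norm_orthD hip); apply: y_orth; rewrite -scaleN1r; exact: closed_subspaceZ.
Qed.

End Friedrichs.

Theorem lemma3p25 (R : realType) (H : completeNormedModType R)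
    (ip : H -> H -> R) (V1 V2 : set H) (w w0 w1 : H) :
  is_inner_product ip ->
  closed_subspace V1 -> closed_subspace V2 ->
  ~ (V1 `<=` V2) -> ~ (V2 `<=` V1) ->
  0 < friedrichs_angle ip V1 V2 ->
  is_orth_proj ip (V1 `&` V2) w w0 ->
  is_orth_proj ip V1 w w1 ->
  `|w1 - w0| <=
    (cos (friedrichs_angle ip V1 V2) * dist_to V1 w + dist_to V2 w)
      / sin (friedrichs_angle ip V1 V2).
Proof.
move=> hip hV1 hV2 _ _ angle_pos w0P w1P.
have := friedrichs_cos_itv hip V1 V2; rewrite in_itv /= => /andP[c0 c1].
have c_dom : -1 <= friedrichs_cos ip V1 V2 <= 1 by rewrite c1 andbT (le_trans _ c0).
move: angle_pos; rewrite /friedrichs_angle acosK ?in_itv // sin_acos //.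
set c := friedrichs_cos ip V1 V2 => angle_pos.
have c_lt1 : c < 1 by rewrite lt_neqAle c1 andbT; apply: contraTneq angle_pos => ->; rewrite acos1 ltxx.
have s_pos : 0 < Num.sqrt (1 - c ^+ 2) by rewrite sqrtr_gt0 subr_gt0 exprn_ilt1.
rewrite ler_pdivlMr // mulrC (orth_proj_dist hip hV1 w1P).
exact (friedrichs_dist_ge hip hV1 hV2 w0P w1P).
Qed.
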